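(* Let $\Omega\subset\mathbb{R}^2$ be a bounded polygonal domain, $X=H^2_0(\Omega)$, $Re>0$, $Ro>0$, $F\in H^{-2}(\Omega)$, and let $X^h\subset X$ be a conforming finite element space on a triangulation of $\Omega$. Let $\psi^h\in X^h$ satisfy $$Re^{-1}\int_\Omega \Delta\psi^h\,\Delta\chi^h\,d\mathbf{x}+\int_\Omega \Delta\psi^h\,(\psi^h_y\chi^h_x-\psi^h_x\chi^h_y)\,d\mathbf{x}-Ro^{-1}\int_\Omega \psi^h_x\,\chi^h\,d\mathbf{x}=Ro^{-1}\int_\Omega F\chi^h\,d\mathbf{x}\qquad\forall\chi^h\in X^h.$$ Then $|\psi^h|_2\le Re\,Ro^{-1}\,\|F\|_{-2}$.
   Context: $H^2_0(\Omega)=\{\psi\in H^2(\Omega):\psi=\partial\psi/\partial\mathbf{n}=0\text{ on }\partial\Omega\}$. $|\chi|_2$ denotes the $H^2$-seminorm, equal to $\|\Delta\chi\|_{L^2}$ on $H^2_0(\Omega)$, and $\|F\|_{-2}=\sup_{0\ne\chi\in H^2_0(\Omega)}|\int_\Omega F\chi|/|\chi|_2$. Subscripts $x,y$ denote partial derivatives. *)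

From HB Require Import structures.
From mathcomp Require Import all_boot all_order all_algebra.
From mathcomp Require Import all_classical all_reals all_analysis.
Set Implicit Arguments. Unset Strict Implicit. Unset Printing Implicit Defensive.
Import Order.TTheory GRing.Theory Num.Theory.
Import numFieldNormedType.Exports.
Local Open Scope classical_set_scope.
Local Open Scope ring_scope.

Section Sobolev.
Variable R : realType.

Definition leb2 := (@lebesgue_measure R \x @lebesgue_measure R)%E.

Definition integ (D : set (R * R)) (f : R * R -> R) : R := Rintegral leb2 D f.

Definition pdx (f : R * R -> R) : R * R -> R :=
  fun p => derive1 (fun t => f (t, p.2)) p.1.
Definition pdy (f : R * R -> R) : R * R -> R :=
  fun p => derive1 (fun t => f (p.1, t)) p.2.

Fixpoint diter (s : seq bool) (f : R * R -> R) : R * R -> R :=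
  match s with
  | [::] => f
  | b :: s' => (if b then pdx else pdy) (diter s' f)
  end.

Definition smooth (f : R * R -> R) : Prop :=
  forall s : seq bool, continuous (diter s f) /\
    forall p : R * R,
      derivable (fun t => diter s f (t, p.2)) p.1 1 /\
      derivable (fun t => diter s f (p.1, t)) p.2 1.

Definition test_fun (Om : set (R * R)) (f : R * R -> R) : Prop :=
  smooth f /\ exists K : set (R * R),
    compact K /\ K `<=` Om /\ forall p, ~ K p -> f p = 0.

Definition L2 (Om : set (R * R)) (g : R * R -> R) : Prop :=
  measurable_fun Om g /\ leb2.-integrable Om (fun p => ((g p) ^+ 2)%:E).

Definition weak_deriv (Om : set (R * R)) (s : seq bool)
    (psi g : R * R -> R) : Prop :=
  L2 Om g /\ forall phi, test_fun Om phi ->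
    integ Om (fun p => psi p * diter s phi p)
    = (-1) ^+ size s * integ Om (fun p => g p * phi p).

(** The multi-indices of order <= 2: 1, x, y, xx, xy, yy. *)
Definition ord2 : seq (seq bool) :=
  [:: [::]; [:: true]; [:: false]; [:: true; true]; [:: true; false];
      [:: false; false]].

Definition H2 (Om : set (R * R)) (psi : R * R -> R) : Prop :=
  L2 Om psi /\ forall s, s \in ord2 -> exists g, weak_deriv Om s psi g.

(** The (chosen representative of the) weak derivative D^s psi. *)
Definition wder (Om : set (R * R)) (s : seq bool) (psi : R * R -> R)
  : R * R -> R := get [set g | weak_deriv Om s psi g].

Definition H20 (Om : set (R * R)) (psi : R * R -> R) : Prop :=
  H2 Om psi /\ exists phi : nat -> R * R -> R,
    (forall n, test_fun Om (phi n)) /\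
    (fun n => \sum_(s <- ord2)
        integ Om (fun p => (diter s (phi n) p - wder Om s psi p) ^+ 2))
      @ \oo --> (0 : R).

Definition wdx Om psi := wder Om [:: true] psi.
Definition wdy Om psi := wder Om [:: false] psi.
Definition wlap Om psi : R * R -> R :=
  fun p => wder Om [:: true; true] psi p + wder Om [:: false; false] psi p.

(** |chi|_2 = || Delta chi ||_{L^2} (the H^2 seminorm on H^2_0). *)
Definition semi2 (Om : set (R * R)) (chi : R * R -> R) : R :=
  Num.sqrt (integ Om (fun p => (wlap Om chi p) ^+ 2)).

Definition Hm2 (Om : set (R * R)) (F : (R * R -> R) -> R) : Prop :=
  (forall (a : R) chi1 chi2, H20 Om chi1 -> H20 Om chi2 ->
     F (fun p => a * chi1 p + chi2 p) = a * F chi1 + F chi2) /\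
  exists C : R, forall chi, H20 Om chi -> `|F chi| <= C * semi2 Om chi.

Definition dualnorm (Om : set (R * R)) (F : (R * R -> R) -> R) : R :=
  sup [set `|F chi| / semi2 Om chi | chi in [set chi | H20 Om chi /\ chi <> (fun=> 0)]].

Definition segment (a b : R * R) : set (R * R) :=
  [set p | exists t : R, 0 <= t <= 1 /\
     p = ((1 - t) * a.1 + t * b.1, (1 - t) * a.2 + t * b.2)].

Definition polygonal_domain (Om : set (R * R)) : Prop :=
  open Om /\ connected Om /\ Om !=set0 /\ bounded_set Om /\
  exists segs : seq ((R * R) * (R * R)),
    closure Om `\` Om = \bigcup_(e in [set` segs]) segment e.1 e.2.

Definition triangle (a b c : R * R) : set (R * R) :=
  [set p | exists l1 l2 l3 : R, 0 <= l1 /\ 0 <= l2 /\ 0 <= l3 /\ l1 + l2 + l3 = 1 /\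
     p = (l1 * a.1 + l2 * b.1 + l3 * c.1, l1 * a.2 + l2 * b.2 + l3 * c.2)].

Definition nondegenerate (a b c : R * R) : Prop :=
  (b.1 - a.1) * (c.2 - a.2) - (b.2 - a.2) * (c.1 - a.1) != 0.

Definition tri_set (T : (R * R) * (R * R) * (R * R)) : set (R * R) :=
  triangle T.1.1 T.1.2 T.2.

Definition vertices (T : (R * R) * (R * R) * (R * R)) : seq (R * R) :=
  [:: T.1.1; T.1.2; T.2].

Definition triangulation (Om : set (R * R))
    (Th : seq ((R * R) * (R * R) * (R * R))) : Prop :=
  (forall T, T \in Th -> nondegenerate T.1.1 T.1.2 T.2) /\
  closure Om = \bigcup_(T in [set` Th]) tri_set T /\
  (forall i j, (i < size Th)%N -> (j < size Th)%N -> i <> j ->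
     let T1 := nth (0, 0, 0) Th i in let T2 := nth (0, 0, 0) Th j in
     (tri_set T1)° `&` (tri_set T2)° = set0 /\
     (tri_set T1 `&` tri_set T2 = set0 \/
      (exists v, v \in vertices T1 /\ v \in vertices T2 /\
          tri_set T1 `&` tri_set T2 = [set v]) \/
      (exists v w, v <> w /\ v \in vertices T1 /\ v \in vertices T2 /\
          w \in vertices T1 /\ w \in vertices T2 /\
          tri_set T1 `&` tri_set T2 = segment v w))).

Definition poly2 (k : nat) (f : R * R -> R) : Prop :=
  exists c : nat -> nat -> R, forall p,
    f p = \sum_(i < k.+1) \sum_(j < k.+1) c i j * p.1 ^+ i * p.2 ^+ j.

Definition conforming_fe_space (Om : set (R * R))
    (Th : seq ((R * R) * (R * R) * (R * R))) (Xh : set (R * R -> R)) : Prop :=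
  (exists basis : seq (R * R -> R),
     Xh = [set f | exists c : nat -> R,
             f = (fun p => \sum_(i < size basis) c i * nth (fun=> 0) basis i p)]) /\
  (exists k : nat, forall f, Xh f -> forall T, T \in Th ->
     exists q, poly2 k q /\ forall p, tri_set T p -> f p = q p) /\
  Xh `<=` H20 Om.

End Sobolev.

From HB Require Import structures.
From mathcomp Require Import all_boot all_order all_algebra.
From mathcomp Require Import all_classical all_reals all_analysis measurable_realfun.
From mathcomp Require Import ring lra.
Import Order.TTheory GRing.Theory Num.Theory.
Import numFieldNormedType.Exports.
Local Open Scope classical_set_scope.
Local Open Scope ring_scope.

(* Test the Galerkin equation with [chi = psi].  The convection integrand is
   [Delta psi] times a determinant with two equal columns, hence zero, and the
   Coriolis term [integ (psi_x * psi)] vanishes because [psi] is an H^2 limit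
   of test functions (integration by parts).  What is left is the energy
   identity [Re^-1 |psi|_2^2 = Ro^-1 F(psi) <= Ro^-1 ||F||_{-2} |psi|_2]. *)

(* The carrier of [leb2]; its measurable sets coincide with those of [R * R]. *)
Definition plane (R : realType) :=
  (g_sigma_algebraType R.-ocitv.-measurable *
   g_sigma_algebraType R.-ocitv.-measurable)%type.

Section open_sets_of_the_plane.
Context {R : realType}.

Lemma exists_rat_between (x y : R) : x < y -> exists q : rat, x < ratr q < y.
Proof. by move=> /rat_in_itvoo[q]; rewrite in_itv /=; exists q. Qed.

Definition rat_box (a b c d : rat) : set (R * R) :=
  `]ratr a, ratr b[ `*` `]ratr c, ratr d[.

Lemma open_bigcup_rat_box (U : set (R * R)) : open U ->
  U = \bigcup_a \bigcup_b \bigcup_c \bigcup_d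
        if pselect (rat_box a b c d `<=` U) is left _ then rat_box a b c d
        else set0.
Proof.
move=> oU; apply/seteqP; split; last first.
  by move=> x [a _ [b _ [c _ [d _]]]]; case: pselect => // boxU /boxU.
move=> x Ux; have /nbhs_ballP [e /= e0 exU] := oU x Ux.
have [a /andP[xa1 xa2]] : exists a : rat, x.1 - e < ratr a < x.1.
  by apply: exists_rat_between; rewrite ltrBlDr ltrDl.
have [b /andP[xb1 xb2]] : exists b : rat, x.1 < ratr b < x.1 + e.
  by apply: exists_rat_between; rewrite ltrDl.
have [c /andP[xc1 xc2]] : exists c : rat, x.2 - e < ratr c < x.2.
  by apply: exists_rat_between; rewrite ltrBlDr ltrDl.
have [d /andP[xd1 xd2]] : exists d : rat, x.2 < ratr d < x.2 + e.
  by apply: exists_rat_between; rewrite ltrDl.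
exists a => //; exists b => //; exists c => //; exists d => //.
case: pselect => [_|[]]; first by rewrite /rat_box /= !in_itv /= xa2 xb1 xc2 xd1.
move=> [y1 y2] []; rewrite /= !in_itv /= => /andP[? ?] /andP[? ?].
apply: exU; split; rewrite /ball /= ltr_norml; apply/andP; split; lra.
Qed.

Lemma open_measurable_R2 {U : set (R * R)} : open U -> measurable U.
Proof.
move=> /open_bigcup_rat_box ->.
apply: bigcupT_measurable_rat => a; apply: bigcupT_measurable_rat => b.
apply: bigcupT_measurable_rat => c; apply: bigcupT_measurable_rat => d.
case: pselect => _; last exact: measurable0.
by apply: measurableX; exact: measurable_itv.
Qed.

Lemma continuous_measurable_fun_R2 {D : set (R * R)} {f : R * R -> R} :
  measurable D -> continuous f -> measurable_fun D f.
Proof.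
move=> mD /continuousP cf; apply: (measurability _ (RGenOpens.measurableE R)).
move=> _ [_ [a [b ->] <-]]; apply: measurableI => //.
by apply: open_measurable_R2; apply: cf; exact: interval_open.
Qed.

Lemma leb2_bounded_lty {A : set (R * R)} :
  measurable A -> bounded_set A -> (leb2 A < +oo)%E.
Proof.
move=> mA [M [_ AM]].
have {AM} [N AN] : exists N : R, forall x, A x -> `|x| <= N.
  by exists (`|M| + 1); apply: AM; rewrite (le_lt_trans (ler_norm M)) // ltrDl.
have AsubN : A `<=` `[-N, N] `*` `[-N, N].
  move=> x Ax; have := AN x Ax; rewrite /Num.norm /= ge_max => /andP[x1 x2].
  by split; rewrite in_itv /= -ler_norml.
have mN : measurable (`[-N, N] `*` `[-N, N] : set (R * R)).
  by apply: measurableX; exact: measurable_itv.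
apply: le_lt_trans (le_measure (@leb2 R) _ _ AsubN) _; rewrite ?inE //.
set I := `[(- N)%R, N]%classic.
have prodE := @product_measure1E _ _ _ _ R lebesgue_measure lebesgue_measure
  I I (measurable_itv _) (measurable_itv _).
apply: (le_lt_trans (_ : _ <= lebesgue_measure I * lebesgue_measure I)%E).
  by rewrite -prodE.
by rewrite lebesgue_measure_itv /= lte_fin; case: ifPn; rewrite ?mul0e -?EFinM ltry.
Qed.

End open_sets_of_the_plane.

Lemma ler_normM_sqr {R : realFieldType} (a b e : R) : 0 < e ->
  `|a * b| <= e * a ^+ 2 + e^-1 * b ^+ 2.
Proof.
move=> e0; rewrite normrM -(real_normK (num_real a)) -(real_normK (num_real b)).
have id : e * `|a| ^+ 2 + e^-1 * `|b| ^+ 2 - `|a| * `|b|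
          = e^-1 * (e * `|a| - `|b|) ^+ 2 + `|a| * `|b|.
  by field; rewrite gt_eqF.
rewrite -subr_ge0 id addr_ge0 // mulr_ge0 ?sqr_ge0 //.
by rewrite invr_ge0 ltW.
Qed.

Section square_integrable.
Context {R : realType} {Om : set (R * R)}.
Hypothesis mOm : measurable (Om : set (plane R)).

Lemma L2_integrable_mul {f g : R * R -> R} : L2 Om f -> L2 Om g ->
  (@leb2 R).-integrable Om (EFin \o (fun p => f p * g p)).
Proof.
move=> [mf If] [mg Ig].
apply: (le_integrable mOm (g := fun p => (f p ^+ 2)%:E + (g p ^+ 2)%:E)%E).
- by apply/measurable_EFinP; exact: measurable_funM.
- move=> p _ /=; rewrite lee_fin [`|_ + _|]ger0_norm ?addr_ge0 ?sqr_ge0 //.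
  by have := ler_normM_sqr (f p) (g p) 1 ltr01; rewrite invr1 !mul1r.
- exact: integrableD.
Qed.

Lemma L2_sub {f g : R * R -> R} : L2 Om f -> L2 Om g -> L2 Om (fun p => f p - g p).
Proof.
move=> [mf If] [mg Ig]; split; first exact: measurable_funB.
apply: (le_integrable mOm (g := fun p => 2%:E * (f p ^+ 2)%:E + 2%:E * (g p ^+ 2)%:E)%E).
- exact/measurable_EFinP/measurable_funX/measurable_funB.
- move=> p _ /=; rewrite lee_fin ger0_norm ?sqr_ge0 // ger0_norm;
    last by rewrite addr_ge0 // mulr_ge0 // sqr_ge0.
  have := sqr_ge0 (f p + g p); nra.
- by apply: integrableD => //; exact: integrableZl.
Qed.

Lemma L2_integ_mul_le {f g : R * R -> R} {e : R} : L2 Om f -> L2 Om g -> 0 < e ->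
  `|integ Om (fun p => f p * g p)| <=
     e * integ Om (fun p => f p ^+ 2) + e^-1 * integ Om (fun p => g p ^+ 2).
Proof.
move=> Lf Lg e0; have [_ If] := Lf; have [_ Ig] := Lg.
have eIf : (@leb2 R).-integrable Om (EFin \o (fun p => e * f p ^+ 2)).
  by apply: (eq_integrable mOm _ _ _ (integrableZl mOm e If)) => p _ /=; rewrite EFinM.
have eIg : (@leb2 R).-integrable Om (EFin \o (fun p => e^-1 * g p ^+ 2)).
  by apply: (eq_integrable mOm _ _ _ (integrableZl mOm e^-1 Ig)) => p _ /=; rewrite EFinM.
rewrite /integ; apply: le_trans (le_normr_Rintegral mOm (L2_integrable_mul Lf Lg)) _.
rewrite -!RintegralZl // -RintegralD //; apply: le_Rintegral => //.
- exact/integrable_norm/L2_integrable_mul.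
- by apply: (eq_integrable mOm _ _ _ (integrableD mOm eIf eIg)) => p _.
- by move=> p _; exact: ler_normM_sqr.
Qed.

Lemma L2_integ_mul_cvg {f h : R * R -> R} {u : nat -> R * R -> R} :
  L2 Om f -> L2 Om h -> (forall n, L2 Om (u n)) ->
  (fun n => integ Om (fun p => (u n p - h p) ^+ 2)) @ \oo --> 0 ->
  (fun n => integ Om (fun p => f p * u n p)) @ \oo --> integ Om (fun p => f p * h p).
Proof.
move=> Lf Lh Lu uh.
set A := integ Om (fun p => f p ^+ 2).
have A0 : 0 <= A by apply: Rintegral_ge0 => p _; exact: sqr_ge0.
apply/cvgrPdist_lt => d d0.
pose e := d / (2 * (A + 1)).
have e0 : 0 < e by rewrite divr_gt0 // mulr_gt0 // ltr_wpDl.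
have eA : e * A < d / 2.
  rewrite /e mulrAC ltr_pdivrMr ?mulr_gt0 ?ltr_wpDl //.
  by rewrite mulrA divfK // ltr_pM2l // ltrDl.
have ed0 : 0 < e * d / 2 by rewrite divr_gt0 // mulr_gt0.
move/cvgrPdist_lt : uh => /(_ _ ed0).
apply: filterS => n; rewrite sub0r normrN.
set B := integ Om _ => Bsmall.
have B0 : 0 <= B by apply: Rintegral_ge0 => p _; exact: sqr_ge0.
rewrite ger0_norm // in Bsmall.
have eB : e^-1 * B < d / 2.
  by rewrite -(ltr_pM2l e0) mulrA mulfV ?gt_eqF // mul1r mulrA.
have diffE : integ Om (fun p => f p * u n p) - integ Om (fun p => f p * h p)
    = integ Om (fun p => f p * (u n p - h p)).
  rewrite /integ -RintegralB ?L2_integrable_mul //.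
  by apply: eq_Rintegral => p _; rewrite mulrBr.
rewrite distrC diffE; apply: le_lt_trans (L2_integ_mul_le Lf (L2_sub (Lu n) Lh) e0) _.
by rewrite [d]splitr ltrD.
Qed.

End square_integrable.

Section test_functions.
Context {R : realType}.
Implicit Types (Om : set (R * R)) (phi : R * R -> R).

Lemma diter_cat (s t : seq bool) phi : diter s (diter t phi) = diter (s ++ t) phi.
Proof. by elim: s => //= b s ->. Qed.

Lemma test_fun_pdx {Om phi} : test_fun Om phi -> test_fun Om (pdx phi).
Proof.
move=> [sm [K [cK [KOm Kz]]]]; split.
  by move=> s; rewrite (diter_cat s [:: true]); exact: sm.
exists K; split => //; split => // p Kp.
have oK : open (~` K).
  by apply: closed_openC; exact: compact_closed (@norm_hausdorff _ _) cK.
have /nbhs_ballP [e /= e0 peK] := oK p Kp.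
have phi0 : \forall t \near p.1, phi (t, p.2) = cst 0 t.
  apply/nbhs_ballP; exists e => // t pt; apply/Kz/peK.
  by split => //=; exact: ballxx.
by rewrite /pdx derive1E (near_eq_derive _ phi0) derive_cst.
Qed.

Lemma test_fun_bounded {Om phi} : test_fun Om phi -> exists N, forall p, `|phi p| <= N.
Proof.
move=> [sm [K [cK [_ Kz]]]].
have cphi : continuous phi := (sm [::]).1.
have [M [_ KM]] := compact_bounded (continuous_compact (continuous_subspaceT cphi) cK).
exists (`|M| + 1) => p; have [Kp|Kp] := pselect (K p).
  by apply: (KM (`|M| + 1)); [rewrite (le_lt_trans (ler_norm M)) // ltrDl|exists p].
by rewrite Kz // normr0 addr_ge0.
Qed.

Lemma test_fun_L2 {Om phi} : measurable (Om : set (plane R)) -> bounded_set Om ->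
  test_fun Om phi -> L2 Om phi.
Proof.
move=> mOm bOm tphi; have [N phiN] := test_fun_bounded tphi.
have mphi : measurable_fun Om phi.
  by case: tphi => sm _; apply: continuous_measurable_fun_R2 => //; exact: (sm [::]).1.
split => //; apply: measurable_bounded_integrable => //.
- exact: leb2_bounded_lty.
- exact: measurable_funX.
rewrite /bounded_near; near=> M => p _ /=.
have N0 : 0 <= N := le_trans (normr_ge0 _) (phiN p).
rewrite normrX (le_trans (_ : _ <= N ^+ 2)) ?lerXn2r ?nnegrE //.
Unshelve. all: by end_near.
Qed.

End test_functions.

Section H20.
Context {R : realType} {Om : set (R * R)}.
Implicit Types psi : R * R -> R.

Lemma H2_weak_deriv {psi} s : H2 Om psi -> s \in ord2 -> weak_deriv Om s psi (wder Om s psi).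
Proof. by move=> [_ Hder] /Hder; exact: getPex. Qed.

Lemma H20_approx {psi} : H20 Om psi -> exists phi : nat -> R * R -> R,
  (forall n, test_fun Om (phi n)) /\
  forall s, s \in ord2 ->
    (fun n => integ Om (fun p => (diter s (phi n) p - wder Om s psi p) ^+ 2))
      @ \oo --> 0.
Proof.
move=> [_ [phi [tphi cvg_sum]]]; exists phi; split => // s s_ord2.
pose err t n := integ Om (fun p => (diter t (phi n) p - wder Om t psi p) ^+ 2).
have err_ge0 t n : 0 <= err t n.
  by apply: Rintegral_ge0 => p _; exact: sqr_ge0.
apply: (squeeze_cvgr _ (cvg_cst 0) cvg_sum); near=> n.
rewrite err_ge0 /= (big_rem s s_ord2) /= lerDl.
by apply: sumr_ge0 => t _; exact: err_ge0.
Unshelve. all: by end_near.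
Qed.

(* Pair [psi] with [pdx (phi n)], [phi n] approximating [psi]: the limit is
   [integ (psi * psi_x)], and the weak-derivative identities of order 1 and 0
   identify it with [- integ (psi_x * psi_0)] and with [integ (psi_0 * psi_x)],
   where [psi_0 := wder Om [::] psi] is only a.e. equal to [psi]. *)
Lemma H20_integ_mul_wdx {psi} : measurable (Om : set (plane R)) -> bounded_set Om ->
  H20 Om psi -> integ Om (fun p => psi p * wdx Om psi p) = 0.
Proof.
move=> mOm bOm Hpsi; have [H2psi _] := Hpsi; have [Lpsi _] := H2psi.
have [phi [tphi phi_cvg]] := H20_approx Hpsi.
have [L0 W0] := H2_weak_deriv [::] H2psi isT.
have [L1 W1] := H2_weak_deriv [:: true] H2psi isT.
have Lphi n := test_fun_L2 mOm bOm (tphi n).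
have Ldphi n := test_fun_L2 mOm bOm (test_fun_pdx (tphi n)).
have cvg_psi := L2_integ_mul_cvg mOm Lpsi L1 Ldphi (phi_cvg [:: true] isT).
have cvg_psi1 := L2_integ_mul_cvg mOm L1 L0 Lphi (phi_cvg [::] isT).
have cvg_psi0 := L2_integ_mul_cvg mOm L0 L1 Ldphi (phi_cvg [:: true] isT).
have by_W1 : (fun n => integ Om (fun p => psi p * pdx (phi n) p)) =
    (fun n => - integ Om (fun p => wdx Om psi p * phi n p)).
  by apply: funext => n; rewrite (W1 _ (tphi n)) /= expr1 mulN1r.
have by_W0 : (fun n => integ Om (fun p => psi p * pdx (phi n) p)) =
    (fun n => integ Om (fun p => wder Om [::] psi p * pdx (phi n) p)).
  by apply: funext => n; rewrite (W0 _ (test_fun_pdx (tphi n))) /= expr0 mul1r.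
have psi_eq1 : integ Om (fun p => psi p * wdx Om psi p)
    = - integ Om (fun p => wdx Om psi p * wder Om [::] psi p).
  by rewrite by_W1 in cvg_psi; exact: (cvg_unique (@Rhausdorff R) cvg_psi (cvgN cvg_psi1)).
have psi_eq0 : integ Om (fun p => psi p * wdx Om psi p)
    = integ Om (fun p => wder Om [::] psi p * wdx Om psi p).
  by rewrite by_W0 in cvg_psi; exact: (cvg_unique (@Rhausdorff R) cvg_psi cvg_psi0).
have mulC : integ Om (fun p => wdx Om psi p * wder Om [::] psi p)
    = integ Om (fun p => wder Om [::] psi p * wdx Om psi p).
  by apply: eq_Rintegral => p _; rewrite mulrC.
lra.
Qed.

End H20.

Section dual_norm.
Context {R : realType} {Om : set (R * R)} {F : (R * R -> R) -> R}.
Hypothesis HF : Hm2 Om F.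

Lemma Hm2_zero {chi} : H20 Om chi -> F (fun=> 0) = 0.
Proof.
move=> Hchi; have [Flin _] := HF; have := Flin (-1) chi chi Hchi Hchi.
have -> : (fun p => -1 * chi p + chi p) = fun=> 0.
  by apply: funext => p; rewrite mulN1r addNr.
by rewrite mulN1r addNr.
Qed.

Lemma Hm2_dualnorm_ubound :
  has_ubound [set `|F chi| / semi2 Om chi
             | chi in [set chi | H20 Om chi /\ chi <> (fun=> 0)]].
Proof.
have [_ [C FC]] := HF; exists `|C| => _ [chi [Hchi _] <-].
have [s_gt0|s_le0] := ltP 0 (semi2 Om chi).
  by rewrite ler_pdivrMr // (le_trans (FC _ Hchi)) // ler_wpM2r ?ler_norm ?ltW.
have -> : semi2 Om chi = 0 by apply/eqP; rewrite eq_le s_le0 sqrtr_ge0.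
by rewrite invr0 mulr0.
Qed.

Lemma dualnorm_ge0 : 0 <= dualnorm Om F.
Proof.
rewrite /dualnorm; set E := (X in sup X).
have [[x Ex]|/set0P/negP/negPn/eqP ->] := pselect (E !=set0); last by rewrite sup0.
apply: le_trans (ub_le_sup Hm2_dualnorm_ubound Ex).
by case: Ex => chi _ <-; rewrite divr_ge0 // sqrtr_ge0.
Qed.

Lemma Hm2_le_dualnorm chi : H20 Om chi -> F chi <= dualnorm Om F * semi2 Om chi.
Proof.
move=> Hchi; have [_ [C FC]] := HF.
have [chi0|chi_neq0] := pselect (chi = fun=> 0).
  by rewrite chi0 (Hm2_zero Hchi) mulr_ge0 ?dualnorm_ge0 ?sqrtr_ge0.
have [s_gt0|s_le0] := ltP 0 (semi2 Om chi).
  rewrite -ler_pdivrMr //; apply: le_trans (ler_wpM2r _ (ler_norm _)) _.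
    by rewrite invr_ge0 ltW.
  by apply: ub_le_sup; [exact: Hm2_dualnorm_ubound | exists chi].
have s0 : semi2 Om chi = 0 by apply/eqP; rewrite eq_le s_le0 sqrtr_ge0.
by move: (FC _ Hchi); rewrite s0 !mulr0; exact: le_trans (ler_norm _).
Qed.

End dual_norm.

Lemma le_div_of_mul_sqr_le {R : realFieldType} (a b s : R) : 0 < a -> 0 <= b -> 0 <= s ->
  a * s ^+ 2 <= b * s -> s <= b / a.
Proof.
move=> a_gt0 b_ge0; rewrite le_eqVlt => /predU1P[<- _|s_gt0 sqr_le].
  by rewrite divr_ge0 // ltW.
by rewrite ler_pdivlMr // mulrC -(ler_pM2r s_gt0) -mulrA -expr2.
Qed.

Theorem theorem3p1 (R : realType) (Om : set (R * R))
  (Th : seq ((R * R) * (R * R) * (R * R))) (Xh : set (R * R -> R))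
  (Re Ro : R) (F : (R * R -> R) -> R) (psih : R * R -> R) :
  polygonal_domain Om ->
  0 < Re -> 0 < Ro ->
  Hm2 Om F ->
  triangulation Om Th ->
  conforming_fe_space Om Th Xh ->
  Xh psih ->
  (forall chih, Xh chih ->
     Re^-1 * integ Om (fun p => wlap Om psih p * wlap Om chih p)
     + integ Om (fun p => wlap Om psih p *
                   (wdy Om psih p * wdx Om chih p - wdx Om psih p * wdy Om chih p))
     - Ro^-1 * integ Om (fun p => wdx Om psih p * chih p)
     = Ro^-1 * F chih) ->
  semi2 Om psih <= Re * Ro^-1 * dualnorm Om F.
Proof.
move=> [oOm [_ [_ [bOm _]]]] Re_gt0 Ro_gt0 HF _ [_ [_ Xh_H20]] Xh_psi galerkin.
have mOm : measurable (Om : set (plane R)) := open_measurable_R2 oOm.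
have Hpsi := Xh_H20 _ Xh_psi.
have convection0 : integ Om (fun p => wlap Om psih p *
    (wdy Om psih p * wdx Om psih p - wdx Om psih p * wdy Om psih p)) = 0.
  rewrite /integ; under eq_Rintegral do rewrite [X in X - _]mulrC subrr mulr0.
  by rewrite Rintegral_cst // mul0r.
have coriolis0 : integ Om (fun p => wdx Om psih p * psih p) = 0.
  rewrite -(H20_integ_mul_wdx mOm bOm Hpsi).
  by apply: eq_Rintegral => p _; exact: mulrC.
have energy : Re^-1 * semi2 Om psih ^+ 2 = Ro^-1 * F psih.
  rewrite -(galerkin _ Xh_psi) convection0 coriolis0 mulr0 addr0 subr0.
  rewrite sqr_sqrtr; last by apply: Rintegral_ge0 => p _; exact: sqr_ge0.
  by congr (_ * _); apply: eq_Rintegral => p _; exact: expr2.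
rewrite (_ : Re * Ro^-1 * dualnorm Om F = Ro^-1 * dualnorm Om F / Re^-1); last first.
  by rewrite invrK [RHS]mulrC mulrA.
apply: le_div_of_mul_sqr_le.
- by rewrite invr_gt0.
- by rewrite mulr_ge0 ?dualnorm_ge0 // invr_ge0 ltW.
- exact: sqrtr_ge0.
- by rewrite energy -mulrA ler_wpM2l ?Hm2_le_dualnorm // invr_ge0 ltW.
Qed.
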